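(* Let $A\in\mathbb{R}^{m\times N}$, $q\in(1,\infty]$, and let $x\in\mathbb{R}^N$ be a nonzero $k$-sparse vector such that $$k<\inf_{h\in\ker(A)\setminus\{0\}}3^{\frac{q}{1-q}}s_q(h).$$ Then $x$ is the unique solution of $\min_{z\in\mathbb{R}^N\setminus\{0\}}\lVert z\rVert_1/\lVert z\rVert_q$ subject to $Az=Ax$.
   Context: For nonzero $h\in\mathbb{R}^N$ and $q\in(1,\infty)$, $s_q(h)=\left(\lVert h\rVert_1/\lVert h\rVert_q\right)^{q/(q-1)}$, and $s_\infty(h)=\lVert h\rVert_1/\lVert h\rVert_\infty$; for $q=\infty$ the factor $3^{q/(1-q)}$ is interpreted as $3^{-1}$. $\ker(A)=\{h: Ah=0\}$. A vector is $k$-sparse if it has at most $k$ nonzero entries. *)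

From HB Require Import structures.
From mathcomp Require Import all_boot all_order all_algebra.
From mathcomp Require Import all_classical all_reals ereal exp.
Set Implicit Arguments. Unset Strict Implicit. Unset Printing Implicit Defensive.
Import Order.TTheory GRing.Theory Num.Theory.
Local Open Scope ring_scope.

(* vectors of R^N are column vectors 'cV[R]_N; entries z i 0 *)

Definition l1norm (R : realType) (N : nat) (z : 'cV[R]_N) : R :=
  \sum_(i < N) `|z i 0|.

Definition linfnorm (R : realType) (N : nat) (z : 'cV[R]_N) : R :=
  \big[Num.max/0]_(i < N) `|z i 0|.

Definition lqnorm (R : realType) (N : nat) (q : \bar R) (z : 'cV[R]_N) : R :=
  match q with
  | r%:E => (\sum_(i < N) `|z i 0| `^ r) `^ r^-1
  | +oo%E => linfnorm z
  | -oo%E => 0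
  end.

Definition sq (R : realType) (N : nat) (q : \bar R) (h : 'cV[R]_N) : R :=
  match q with
  | r%:E => (l1norm h / lqnorm q h) `^ (r / (r - 1))
  | +oo%E => l1norm h / linfnorm h
  | -oo%E => 0
  end.

(* the factor 3^{q/(1-q)}, interpreted as 3^{-1} for q = oo *)
Definition three_factor (R : realType) (q : \bar R) : R :=
  match q with
  | r%:E => 3 `^ (r / (1 - r))
  | +oo%E => 3^-1
  | -oo%E => 0
  end.

Definition ksparse (R : realType) (N : nat) (k : nat) (x : 'cV[R]_N) : bool :=
  (#|[set i : 'I_N | x i ord0 != 0%R]| <= k)%N.

Definition is_solution (R : realType) (m N : nat) (q : \bar R)
    (A : 'M[R]_(m, N)) (b : 'cV[R]_m) (z : 'cV[R]_N) : Prop :=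
  z != 0 /\ A *m z = b /\
  forall w : 'cV[R]_N, w != 0 -> A *m w = b ->
    l1norm z / lqnorm q z <= l1norm w / lqnorm q w.

From HB Require Import structures.
From mathcomp Require Import all_boot all_order all_algebra.
From mathcomp Require Import all_classical all_reals all_analysis lra ring.
Set Implicit Arguments. Unset Strict Implicit. Unset Printing Implicit Defensive.
Import Order.TTheory GRing.Theory Num.Theory.
Local Open Scope ring_scope.

(* Let S be the support of x, |S| <= k, and let w = x + h with h a nonzero
   kernel vector.  By Hoelder, ||y_S||_1 <= c ||y||_q with c = k^(1-1/q), and
   the hypothesis on k is exactly 3 c ||h||_q < ||h||_1.  Hence
   ||w||_1 >= ||x||_1 + ||h||_1 - 2 ||h_S||_1 > ||x||_1 + c ||h||_q, while
   ||w||_q <= ||x||_q + ||h||_q and ||x||_1 <= c ||x||_q; these three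
   inequalities force ||x||_1/||x||_q < ||w||_1/||w||_q. *)

Lemma col_neq0 (R : nzRingType) (N : nat) (z : 'cV[R]_N) :
  z != 0 -> exists i, z i 0 != 0.
Proof.
move=> z0; apply/existsP; apply: contraNT z0 => /existsPn z_0.
by apply/eqP/matrixP => i j; rewrite ord1 mxE; apply/eqP/negbNE/z_0.
Qed.

Section FiniteHoelder.
Variable R : realType.

Let measurable_nat (f : nat -> R) : measurable_fun [set: nat] f. Proof. by []. Qed.

Definition zero_ext (N : nat) (a : 'I_N -> R) : nat -> R :=
  fun n => if insub n is Some i then a i else 0.

Lemma zero_ext_ord N (a : 'I_N -> R) (i : 'I_N) : zero_ext a i = a i.
Proof. by rewrite /zero_ext valK. Qed.

Lemma zero_ext_out N (a : 'I_N -> R) n : (N <= n)%N -> zero_ext a n = 0.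
Proof. by move=> Nn; rewrite /zero_ext insubF // ltnNge Nn. Qed.

Lemma zero_extD N (a b : 'I_N -> R) :
  (zero_ext a \+ zero_ext b)%R = zero_ext (fun i => a i + b i).
Proof. by apply/funext => n; rewrite /zero_ext /=; case: insub; rewrite ?addr0. Qed.

Lemma zero_extM N (a b : 'I_N -> R) :
  (zero_ext a \* zero_ext b)%R = zero_ext (fun i => a i * b i).
Proof. by apply/funext => n; rewrite /zero_ext /=; case: insub; rewrite ?mulr0. Qed.

Lemma Lnorm_counting_zero_ext N (a : 'I_N -> R) p : 0 < p ->
  Lnorm counting p%:E (EFin \o zero_ext a) = ((\sum_i `|a i| `^ p) `^ p^-1)%:E.
Proof.
move=> p0; rewrite Lnorm_counting //.
rewrite (nneseries_split 0 N); last by move=> n; rewrite lee_fin powR_ge0.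
rewrite add0n ereal_series_cond eseries0 ?adde0; last first.
  by move=> n _ /andP[Nn _]; rewrite /= zero_ext_out // normr0 powR0 // gt_eqF.
rewrite big_mkord; under eq_bigr do rewrite /= zero_ext_ord.
by rewrite sumEFin poweR_EFin.
Qed.

Lemma minkowski_sum N (a b : 'I_N -> R) p : 1 <= p ->
  (\sum_i `|a i + b i| `^ p) `^ p^-1 <=
  (\sum_i `|a i| `^ p) `^ p^-1 + (\sum_i `|b i| `^ p) `^ p^-1.
Proof.
move=> p1; have p0 : 0 < p by apply: lt_le_trans p1.
have := @minkowski_EFin _ _ R counting (zero_ext a) (zero_ext b) p
  (measurable_nat _) (measurable_nat _) p1.
by rewrite zero_extD !Lnorm_counting_zero_ext // -EFinD lee_fin.
Qed.

Lemma hoelder_sum N (a b : 'I_N -> R) p q : 0 < p -> 0 < q -> p^-1 + q^-1 = 1 ->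
  \sum_i `|a i * b i| <=
  (\sum_i `|a i| `^ p) `^ p^-1 * (\sum_i `|b i| `^ q) `^ q^-1.
Proof.
move=> p0 q0 pq.
have := @hoelder _ _ R counting (zero_ext a) (zero_ext b) p q
  (measurable_nat _) (measurable_nat _) p0 q0 pq.
rewrite zero_extM !Lnorm_counting_zero_ext // -EFinM lee_fin invr1.
by under eq_bigr do rewrite powRr1 //; rewrite powRr1 // sumr_ge0.
Qed.

End FiniteHoelder.

(* [inv_conjugate q] is 1/q' for the Hoelder conjugate q' of q, i.e. 1 - 1/q,
   and 1 for q = +oo. *)
Definition inv_conjugate (R : realType) (q : \bar R) : R :=
  if q is r%:E then 1 - r^-1 else 1.

Section LqNorm.
Variables (R : realType) (N : nat).
Implicit Types (q : \bar R) (y z : 'cV[R]_N).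

Lemma l1norm_ge0 z : 0 <= l1norm z.
Proof. by rewrite sumr_ge0. Qed.

Lemma linfnorm_ge_entry z i : `|z i 0| <= linfnorm z.
Proof. exact: (le_bigmax _ (fun i => `|z i 0|)). Qed.

Lemma lqnorm_ge0 q z : 0 <= lqnorm q z.
Proof. by case: q => [r||] /=; rewrite ?powR_ge0 ?bigmax_ge_id. Qed.

Lemma lqnorm_gt0 q z : q != -oo%E -> z != 0 -> 0 < lqnorm q z.
Proof.
move=> qNy /col_neq0[i zi0]; have zi_gt0 : 0 < `|z i 0| by rewrite normr_gt0.
case: q qNy => [r||] //= _; last exact: lt_le_trans (linfnorm_ge_entry z i).
apply: powR_gt0; rewrite (bigD1 i) //=; apply: ltr_pwDl; first exact: powR_gt0.
by rewrite sumr_ge0 // => j _; rewrite powR_ge0.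
Qed.

Lemma lqnormD q y z : (1 <= q)%E -> lqnorm q (y + z) <= lqnorm q y + lqnorm q z.
Proof.
case: q => [r||] //= q1.
  under eq_bigr do rewrite mxE.
  by apply: (minkowski_sum (fun i => y i 0) (fun i => z i 0)); rewrite -lee_fin.
apply: bigmax_le => [|i _]; first by rewrite addr_ge0 // bigmax_ge_id.
by rewrite mxE (le_trans (ler_normD _ _)) // lerD // linfnorm_ge_entry.
Qed.

Lemma sum_support_le_lqnorm q (k : nat) (S : {set 'I_N}) y : (1 < q)%E ->
  (#|S| <= k)%N -> \sum_(i in S) `|y i 0| <= k%:R `^ inv_conjugate q * lqnorm q y.
Proof.
case: q => [r||] //= q1 Sk; last first.
  rewrite powRr1 // (le_trans (ler_sum _ (fun i _ => linfnorm_ge_entry y i))) //.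
  by rewrite sumr_const -[_ *+ #|S|]mulr_natl ler_wpM2r ?bigmax_ge_id // ler_nat.
have r_gt1 : 1 < r by rewrite -lte_fin.
have e0 : 0 < 1 - r^-1 by rewrite subr_gt0 invf_lt1 // (lt_trans ltr01).
have conj : r^-1 + (1 - r^-1)^-1^-1 = 1 by rewrite invrK addrC subrK.
have := hoelder_sum (fun i => y i 0) (fun i => (i \in S)%:R)
  (lt_trans ltr01 r_gt1) (_ : 0 < (1 - r^-1)^-1) conj.
rewrite invr_gt0 e0 invrK => /(_ isT).
have -> : \sum_i `|y i 0 * (i \in S)%:R| = \sum_(i in S) `|y i 0|.
  rewrite [RHS]big_mkcond; apply: eq_bigr => i _.
  by case: (i \in S); rewrite ?mulr1 ?mulr0 ?normr0.
have -> : \sum_i `|((i \in S)%:R : R)| `^ (1 - r^-1)^-1 = #|S|%:R.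
  rewrite -sum1_card natr_sum [RHS]big_mkcond; apply: eq_bigr => i _.
  by case: (i \in S); rewrite ?normr1 ?powR1 ?normr0 ?powR0 // invr_neq0 // gt_eqF.
move/le_trans; apply; rewrite mulrC ler_wpM2r ?powR_ge0 //.
by apply: ge0_ler_powR; rewrite ?nnegrE ?ler_nat // ltW.
Qed.

Lemma three_lqnorm_lt_l1norm q (k : nat) z : (1 < q)%E -> z != 0 ->
  k%:R < three_factor q * sq q z -> 3 * k%:R `^ inv_conjugate q * lqnorm q z < l1norm z.
Proof.
move=> q1 z0 kz; have nz_gt0 : 0 < lqnorm q z by apply: lqnorm_gt0 z0; case: q q1 {kz}.
suff : k%:R `^ inv_conjugate q < 3^-1 * (l1norm z / lqnorm q z).
  by move=> kz3; rewrite -ltr_pdivlMr // mulrC -ltr_pdivlMr // mulrC.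
case: q q1 kz {nz_gt0} => [r||] //= q1; last by rewrite powRr1.
have r_gt1 : 1 < r by rewrite -lte_fin.
have e0 : 0 < 1 - r^-1 by rewrite subr_gt0 invf_lt1 // (lt_trans ltr01).
have ratio_ge0 : 0 <= l1norm z / lqnorm r%:E z by rewrite divr_ge0 ?l1norm_ge0 ?lqnorm_ge0.
move: (l1norm z / _) ratio_ge0 => rho rho_ge0.
have k_nneg : (k%:R : R) \in Num.nneg by rewrite nnegrE.
move/(gt0_ltr_powR e0 k_nneg); rewrite nnegrE mulr_ge0 ?powR_ge0 // => /(_ isT).
rewrite powRM ?powR_ge0 // -!powRrM.
have r_neq0 : r != 0 by rewrite gt_eqF // (lt_trans ltr01).
have r_neq1 : r - 1 != 0 by rewrite subr_eq0 gt_eqF.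
have -> : r / (1 - r) * (1 - r^-1) = -1.
  by field; rewrite r_neq0 -opprB oppr_eq0.
have -> : r / (r - 1) * (1 - r^-1) = 1.
  by field; rewrite r_neq0.
by rewrite powR_inv1 // powRr1.
Qed.
End LqNorm.

Lemma ratio_lt (R : realFieldType) (a b c H L D : R) :
  0 <= a -> 0 < b -> 0 < D -> 0 <= H ->
  a <= c * b -> D <= b + H -> a + c * H < L -> a / b < L / D.
Proof.
move=> a_ge0 b_gt0 D_gt0 H_ge0 a_le D_le L_gt.
rewrite ltr_pdivrMr // mulrAC ltr_pdivlMr //.
apply: le_lt_trans (ler_wpM2l a_ge0 D_le) _.
apply: le_lt_trans (_ : (a + c * H) * b < L * b); last by rewrite ltr_pM2r.
by rewrite mulrDr mulrDl lerD2l mulrAC ler_wpM2r.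
Qed.

Section Support.
Variables (R : realType) (N : nat) (S : {set 'I_N}) (x : 'cV[R]_N).
Hypothesis x_supp : forall i, i \notin S -> x i 0 = 0.

Lemma l1norm_supported : l1norm x = \sum_(i in S) `|x i 0|.
Proof.
rewrite /l1norm [RHS]big_mkcond; apply: eq_bigr => i _.
by case: ifP => // /negbT/x_supp ->; rewrite normr0.
Qed.

Lemma l1norm_addr_ge h :
  l1norm x + l1norm h - 2 * \sum_(i in S) `|h i 0| <= l1norm (x + h).
Proof.
rewrite l1norm_supported /l1norm [X in _ <= X](bigID (mem S)) /=.
rewrite [\sum_(i < N) `|h i 0|](bigID (mem S)) /=.
have off_S : \sum_(i | i \notin S) `|(x + h) i 0| = \sum_(i | i \notin S) `|h i 0|.
  by apply: eq_bigr => i /x_supp xi0; rewrite mxE xi0 add0r.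
have on_S : \sum_(i in S) `|x i 0| - \sum_(i in S) `|h i 0| <= \sum_(i in S) `|(x + h) i 0|.
  by rewrite -sumrB; apply: ler_sum => i _; rewrite mxE lerB_normD.
lra.
Qed.

End Support.

Section NullSpaceProperty.
Variables (R : realType) (N : nat) (nu : 'cV[R]_N -> R) (c : R).
Implicit Types (y z h w : 'cV[R]_N).
Hypotheses (nu_ge0 : forall z, 0 <= nu z) (nu_gt0 : forall z, z != 0 -> 0 < nu z)
  (nuD : forall y z, nu (y + z) <= nu y + nu z).
Variables (S : {set 'I_N}) (x : 'cV[R]_N).
Hypotheses (x_supp : forall i, i \notin S -> x i 0 = 0)
  (sum_support_le : forall y, \sum_(i in S) `|y i 0| <= c * nu y).

Lemma ratio_lt_addr h : x != 0 -> x + h != 0 -> 3 * c * nu h < l1norm h ->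
  l1norm x / nu x < l1norm (x + h) / nu (x + h).
Proof.
move=> x0 xh0 nsp; apply: (ratio_lt (c := c) (H := nu h)); rewrite ?l1norm_ge0 //.
- exact: nu_gt0.
- exact: nu_gt0.
- by rewrite (l1norm_supported x_supp).
- apply: lt_le_trans (l1norm_addr_ge x_supp h).
  rewrite -addrA ltrD2l ltrBrDr; apply: le_lt_trans nsp.
  rewrite -mulrA [3 * _]mulr_natl mulrS lerD2l mulrDl mul1r.
  by apply: lerD; apply: sum_support_le.
Qed.

Lemma ratio_strict_min m (A : 'M[R]_(m, N)) :
  x != 0 -> (forall h, A *m h = 0 -> h != 0 -> 3 * c * nu h < l1norm h) ->
  forall w, w != 0 -> A *m w = A *m x -> w != x ->
  l1norm x / nu x < l1norm w / nu w.
Proof.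
move=> x0 nsp w w0 Aw wx; have -> : w = x + (w - x) by rewrite addrC subrK.
apply: ratio_lt_addr => //; first by rewrite addrC subrK.
by apply: nsp; rewrite ?subr_eq0 // mulmxBr Aw subrr.
Qed.

End NullSpaceProperty.

Lemma strict_minimizer_unique_solution (R : realType) (m N : nat) (q : \bar R)
    (A : 'M[R]_(m, N)) (x : 'cV[R]_N) : x != 0 ->
  (forall w, w != 0 -> A *m w = A *m x -> w != x ->
    l1norm x / lqnorm q x < l1norm w / lqnorm q w) ->
  is_solution q A (A *m x) x /\
  (forall z, is_solution q A (A *m x) z -> z = x).
Proof.
move=> x0 x_min; split.
  do 2!split => //; move=> w w0 Aw.
  by have [->|wx] := eqVneq w x; last exact/ltW/x_min.
move=> z [z0 [Az z_min]]; apply/eqP/negPn/negP => zx.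
by have := z_min x x0 erefl; rewrite leNgt x_min.
Qed.

Unset Implicit Arguments.
Local Open Scope classical_set_scope.

Theorem proposition3 (R : realType) (m N : nat) (A : 'M[R]_(m, N))
  (q : \bar R) (hq : (1%:E < q)%E) (k : nat) (x : 'cV[R]_N)
  (hx0 : x != 0) (hxk : ksparse k x)
  (hk : ((k%:R)%:E < ereal_inf
          [set (three_factor q * sq q h)%:E | h in [set h : 'cV[R]_N | A *m h = 0%R /\ h != 0%R]])%E) :
  is_solution q A (A *m x) x /\
  (forall z : 'cV[R]_N, is_solution q A (A *m x) z -> z = x).
Proof.
have qNy : q != -oo%E by apply: contraTneq hq => ->.
set S := [set i | x i 0 != 0]%SET.
have x_supp (i : 'I_N) : i \notin S -> x i 0 = 0 by rewrite inE negbK => /eqP.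
apply: strict_minimizer_unique_solution => //.
apply: (ratio_strict_min (nu := lqnorm q) (c := k%:R `^ inv_conjugate q) _ _ _ x_supp) => //.
- exact: lqnorm_ge0.
- by move=> z; apply: lqnorm_gt0.
- by move=> y z; apply/lqnormD/ltW.
- by move=> y; apply: sum_support_le_lqnorm.
- move=> h Ah h0; apply: three_lqnorm_lt_l1norm => //.
  by rewrite -lte_fin (lt_le_trans hk) //; apply: ereal_inf_lbound; exists h.
Qed.
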